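(* For every $x\in\mathbb{R}$ there exists $k\in\{0,1,2,3\}$ such that $|\mathrm{Re}(H^{(k)}(x))|\ge 1/4$, where $H^{(k)}$ denotes the $k$-th derivative of $H$.
   Context: Rudin–Shapiro polynomials: $P_0(z)=Q_0(z)=1$ and for $s\ge0$, $P_{s+1}(z)=P_s(z)+z^{2^s}Q_s(z)$, $Q_{s+1}(z)=P_s(z)-z^{2^s}Q_s(z)$. Let $t$ be an odd positive integer and $T:=2^{t+10}$. For $x\in\mathbb{R}$ define $\alpha(x):=2^{-(t+1)/2}P_t(e^{ix/T})$, $\beta(x):=2^{-(t+1)/2}Q_t(e^{ix/T})$, and $H(x):=e^{ix}\alpha(x)+e^{2ix}\beta(x)$. *)

From Stdlib Require Import Reals.
From Coquelicot Require Import Coquelicot.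
Open Scope R_scope.

Fixpoint Cpow (z : C) (n : nat) : C :=
  match n with O => RtoC 1 | S m => Cmult z (Cpow z m) end.

Definition cis (x : R) : C := (cos x, sin x).

(* Rudin--Shapiro pair (P_s(z), Q_s(z)):
   P_0 = Q_0 = 1, P_{s+1} = P_s + z^{2^s} Q_s, Q_{s+1} = P_s - z^{2^s} Q_s *)
Fixpoint RS (s : nat) (z : C) : C * C :=
  match s with
  | O => (RtoC 1, RtoC 1)
  | S s' => let (p, q) := RS s' z in
            (Cplus p (Cmult (Cpow z (2 ^ s')) q),
             Cminus p (Cmult (Cpow z (2 ^ s')) q))
  end.
Definition RS_P (s : nat) (z : C) : C := fst (RS s z).
Definition RS_Q (s : nat) (z : C) : C := snd (RS s z).

Definition Tt (t : nat) : R := 2 ^ (t + 10).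

Definition nrm (t : nat) : R := Rpower 2 (- (INR t + 1) / 2).

Definition alpha (t : nat) (x : R) : C := Cmult (RtoC (nrm t)) (RS_P t (cis (x / Tt t))).
Definition beta  (t : nat) (x : R) : C := Cmult (RtoC (nrm t)) (RS_Q t (cis (x / Tt t))).

Definition H (t : nat) (x : R) : C :=
  Cplus (Cmult (cis x) (alpha t x)) (Cmult (cis (2 * x)) (beta t x)).

Definition Cderive_n (f : R -> C) (k : nat) (x : R) : C :=
  (Derive_n (fun y => Re (f y)) k x, Derive_n (fun y => Im (f y)) k x).

(* On the unit circle |P_t|^2 + |Q_t|^2 = 2^(t+1), so w := e^(ix) alpha(x) and
   v := e^(2ix) beta(x) satisfy |w|^2 + |v|^2 = 1.  The polynomials P_t, Q_t have
   degree < 2^t while alpha and beta read them on the scale T = 2^(t+10); a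
   Bernstein-type bound, proved from the Rudin-Shapiro recursion with the
   parallelogram law, makes the j-th derivatives of alpha and beta of size at most
   2^(-10 j).  Hence H^(k)(x) = i^k (w + 2^k v) up to an error below 1/32 for k <= 3,
   and Re (w + v), Im (w + 2 v), Re (w + 4 v), Im (w + 8 v) cannot all be smaller
   than 9/32 in absolute value when |w|^2 + |v|^2 = 1. *)

From Pilot Require Import Defs.
From Stdlib Require Import Reals Arith Lra Lia.
From Coquelicot Require Import Coquelicot.
Open Scope R_scope.

Ltac C_ring :=
  apply injective_projections; unfold Cplus, Cminus, Cmult, Copp, RtoC, Ci; simpl; ring.

Lemma is_derive_eq (f : R -> R) (x l l' : R) :
  l = l' -> is_derive f x l -> is_derive f x l'.
Proof. now intros <-. Qed.

Definition is_Cderive (f f' : R -> C) : Prop :=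
  forall x, is_derive (fun y => Re (f y)) x (Re (f' x)) /\
            is_derive (fun y => Im (f y)) x (Im (f' x)).

Lemma is_Cderive_ext (f g f' : R -> C) :
  (forall x, f x = g x) -> is_Cderive f f' -> is_Cderive g f'.
Proof.
  intros Efg Df x; destruct (Df x) as [Dre Dim].
  split; eapply is_derive_ext; try eassumption; intros y; simpl; now rewrite Efg.
Qed.

Lemma is_Cderive_eq (f f' g' : R -> C) :
  (forall x, f' x = g' x) -> is_Cderive f f' -> is_Cderive f g'.
Proof. intros Ef' Df x; rewrite <- Ef'; apply Df. Qed.

Lemma is_Cderive_const (c : C) : is_Cderive (fun _ => c) (fun _ => 0%C).
Proof. intros x; split; apply (is_derive_const (V := R_NormedModule)). Qed.

Lemma is_Cderive_plus (f f' g g' : R -> C) :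
  is_Cderive f f' -> is_Cderive g g' ->
  is_Cderive (fun x => f x + g x)%C (fun x => f' x + g' x)%C.
Proof.
  intros Df Dg x; destruct (Df x), (Dg x).
  split.
  - now apply (is_derive_plus (fun y => Re (f y)) (fun y => Re (g y))).
  - now apply (is_derive_plus (fun y => Im (f y)) (fun y => Im (g y))).
Qed.

Lemma is_Cderive_mult (f f' g g' : R -> C) :
  is_Cderive f f' -> is_Cderive g g' ->
  is_Cderive (fun x => f x * g x)%C (fun x => f' x * g x + f x * g' x)%C.
Proof.
  intros Df Dg x; destruct (Df x) as [Dfr Dfi], (Dg x) as [Dgr Dgi].
  assert (Dm := fun u v u' v' Du Dv =>
            is_derive_mult u v x u' v' Du Dv (fun a b => Rmult_comm a b)).
  split; eapply is_derive_eq.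
  2: exact (is_derive_minus _ _ _ _ _ (Dm _ _ _ _ Dfr Dgr) (Dm _ _ _ _ Dfi Dgi)).
  3: exact (is_derive_plus _ _ _ _ _ (Dm _ _ _ _ Dfr Dgi) (Dm _ _ _ _ Dfi Dgr)).
  all: unfold minus, plus, opp, mult, Re, Im; simpl; ring.
Qed.

Lemma is_Cderive_scal (c : C) (f f' : R -> C) :
  is_Cderive f f' -> is_Cderive (fun x => c * f x)%C (fun x => c * f' x)%C.
Proof.
  intros Df; refine (is_Cderive_eq _ _ _ _ (is_Cderive_mult _ _ _ _ (is_Cderive_const c) Df)).
  intros x; ring.
Qed.

Lemma is_Cderive_minus (f f' g g' : R -> C) :
  is_Cderive f f' -> is_Cderive g g' ->
  is_Cderive (fun x => f x - g x)%C (fun x => f' x - g' x)%C.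
Proof.
  intros Df Dg; apply (is_Cderive_ext (fun x => f x + -1 * g x)%C); [intros x; ring|].
  refine (is_Cderive_eq _ _ _ _ (is_Cderive_plus _ _ _ _ Df (is_Cderive_scal (-1) _ _ Dg))).
  intros x; ring.
Qed.

Lemma is_Cderive_cis (c : R) :
  is_Cderive (fun x => cis (c * x)) (fun x => Ci * c * cis (c * x))%C.
Proof. intros x; unfold cis; split; simpl; auto_derive; auto; ring. Qed.

Lemma is_Cderive_comp_scal (u : R) (f f' : R -> C) :
  is_Cderive f f' -> is_Cderive (fun x => f (x * u)) (fun x => u * f' (x * u)%R)%C.
Proof.
  intros Df x; destruct (Df (x * u)) as [Dre Dim].
  assert (Du : is_derive (fun y => y * u) x u) by (auto_derive; auto; ring).
  split; eapply is_derive_eq.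
  2: exact (is_derive_comp (fun y => Re (f y)) (fun y => y * u) x _ _ Dre Du).
  3: exact (is_derive_comp (fun y => Im (f y)) (fun y => y * u) x _ _ Dim Du).
  all: unfold scal, Re, Im; simpl; unfold mult; simpl; ring.
Qed.

Lemma Cderive_n_ext (f g : R -> C) (k : nat) (x : R) :
  (forall y, f y = g y) -> Cderive_n f k x = Cderive_n g k x.
Proof.
  intros Efg; unfold Cderive_n.
  now rewrite (Derive_n_ext (fun y => Re (f y)) (fun y => Re (g y))),
              (Derive_n_ext (fun y => Im (f y)) (fun y => Im (g y)))
    by (intros; now rewrite Efg).
Qed.

Lemma Cderive_n_chain (f : nat -> R -> C) :
  (forall k, is_Cderive (f k) (f (S k))) ->
  forall k x, Cderive_n (f O) k x = f k x.
Proof.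
  intros Df k; unfold Cderive_n.
  assert (Hk : forall y, Derive_n (fun y => Re (f O y)) k y = Re (f k y) /\
                         Derive_n (fun y => Im (f O y)) k y = Im (f k y)).
  { induction k as [|k IH]; intros y; [easy|]; simpl.
    rewrite (Derive_ext _ _ _ (fun z => proj1 (IH z))),
            (Derive_ext _ _ _ (fun z => proj2 (IH z))).
    split; apply is_derive_unique, Df. }
  intros x; destruct (Hk x) as [-> ->]; now destruct (f k x).
Qed.

(* [leibniz c q m] is the binomial sum  sum_j C(m,j) c^(m-j) q_j,  built by Pascal's
   rule.  If q_j = (-i)^j g^(j), then  e^(ic th) leibniz c q m = (-i)^m (e^(ic th) g)^(m). *)
Fixpoint leibniz (c : R) (q : nat -> C) (m : nat) : C :=
  match m with
  | O => q O
  | S m => (c * leibniz c q m + leibniz c (fun j => q (S j)) m)%C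
  end.

Lemma Cmod_shift_le (rho d : R) (q : nat -> C) (m : nat) :
  (forall j, (j <= S m)%nat -> Cmod (q j) <= rho * d ^ j) ->
  forall j, (j <= m)%nat -> Cmod (q (S j)) <= rho * d * d ^ j.
Proof.
  intros Hq j Hj; replace (rho * d * d ^ j) with (rho * d ^ S j) by (simpl; ring).
  apply Hq; lia.
Qed.

Section Leibniz.
Variable c : R.

Lemma is_Cderive_leibniz (q : nat -> R -> C) :
  (forall j, is_Cderive (q j) (fun th => Ci * q (S j) th)%C) ->
  forall m, is_Cderive (fun th => leibniz c (fun j => q j th) m)
                       (fun th => Ci * leibniz c (fun j => q (S j) th) m)%C.
Proof.
  intros Dq m; revert q Dq; induction m as [|m IH]; intros q Dq; [exact (Dq O)|].
  refine (is_Cderive_eq _ _ _ _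
            (is_Cderive_plus _ _ _ _ (is_Cderive_scal c _ _ (IH q Dq))
                                     (IH (fun j => q (S j)) (fun j => Dq (S j))))).
  intros th; simpl; ring.
Qed.

Lemma is_Cderive_cis_leibniz (q : nat -> R -> C) :
  (forall j, is_Cderive (q j) (fun th => Ci * q (S j) th)%C) ->
  forall m, is_Cderive (fun th => cis (c * th) * leibniz c (fun j => q j th) m)%C
                       (fun th => Ci * (cis (c * th) * leibniz c (fun j => q j th) (S m)))%C.
Proof.
  intros Dq m.
  refine (is_Cderive_eq _ _ _ _
            (is_Cderive_mult _ _ _ _ (is_Cderive_cis c) (is_Cderive_leibniz q Dq m))).
  intros th; simpl; ring.
Qed.

Hypothesis c_ge0 : 0 <= c.

Lemma Cmod_leibniz_le (d rho : R) (q : nat -> C) (m : nat) :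
  0 <= d -> (forall j, (j <= m)%nat -> Cmod (q j) <= rho * d ^ j) ->
  Cmod (leibniz c q m) <= rho * (c + d) ^ m.
Proof.
  intros d_ge0; revert rho q; induction m as [|m IH]; intros rho q Hq.
  { specialize (Hq O (le_n O)); simpl in *; lra. }
  assert (Hl := IH rho q (fun j Hj => Hq j (le_S _ _ Hj))).
  assert (Hr := IH (rho * d) (fun j => q (S j)) (Cmod_shift_le _ _ _ _ Hq)).
  simpl leibniz; eapply Rle_trans; [apply Cmod_triangle|].
  rewrite Cmod_mult, Cmod_R, Rabs_pos_eq by exact c_ge0.
  simpl; nra.
Qed.

Lemma Cmod_leibniz_sub_top (rho : R) (q : nat -> C) (m : nat) :
  (forall j, (j <= m)%nat -> Cmod (q j) <= rho * c ^ j) ->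
  Cmod (leibniz c q m - q m) <= (2 ^ m - 1) * rho * c ^ m.
Proof.
  revert rho q; induction m as [|m IH]; intros rho q Hq.
  { simpl; unfold Cminus; rewrite Cplus_opp_r, Cmod_0; lra. }
  assert (Hl := Cmod_leibniz_le c rho q m c_ge0 (fun j Hj => Hq j (le_S _ _ Hj))).
  assert (Hr := IH (rho * c) (fun j => q (S j)) (Cmod_shift_le _ _ _ _ Hq)).
  replace (leibniz c q (S m) - q (S m))%C
    with (c * leibniz c q m + (leibniz c (fun j => q (S j)) m - q (S m)))%C by (simpl; ring).
  eapply Rle_trans; [apply Cmod_triangle|].
  rewrite Cmod_mult, Cmod_R, Rabs_pos_eq by exact c_ge0.
  replace (c + c) with (2 * c) in Hl by ring; rewrite Rpow_mult_distr in Hl.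
  simpl; nra.
Qed.

Lemma Cmod_leibniz_sub_low (d rho : R) (q : nat -> C) (m : nat) :
  0 <= d -> (forall j, (j <= m)%nat -> Cmod (q j) <= rho * d ^ j) ->
  Cmod (leibniz c q m - c ^ m * q O) <= ((c + d) ^ m - c ^ m) * rho.
Proof.
  intros d_ge0; revert rho q; induction m as [|m IH]; intros rho q Hq.
  { simpl; rewrite Cmult_1_l; unfold Cminus; rewrite Cplus_opp_r, Cmod_0; lra. }
  assert (Hl := IH rho q (fun j Hj => Hq j (le_S _ _ Hj))).
  assert (Hr := Cmod_leibniz_le d (rho * d) (fun j => q (S j)) m d_ge0
                                 (Cmod_shift_le _ _ _ _ Hq)).
  replace (leibniz c q (S m) - c ^ S m * q O)%C
    with (c * (leibniz c q m - c ^ m * q O) + leibniz c (fun j => q (S j)) m)%C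
    by (simpl; rewrite <- !RtoC_pow; ring).
  eapply Rle_trans; [apply Cmod_triangle|].
  rewrite Cmod_mult, Cmod_R, Rabs_pos_eq by exact c_ge0.
  simpl; nra.
Qed.

End Leibniz.

(* [rsP s m th] and [rsQ s m th] are (-i)^m times the m-th derivatives of
   th |-> P_s(e^(i th)) and th |-> Q_s(e^(i th)). *)
Fixpoint rs_jet (s : nat) (th : R) : (nat -> C) * (nat -> C) :=
  match s with
  | O => let one m : C := match m with O => 1 | S _ => 0 end in (one, one)
  | S s => let pq := rs_jet s th in
           let w m := (cis (2 ^ s * th) * leibniz (2 ^ s) (snd pq) m)%C in
           (fun m => fst pq m + w m, fun m => fst pq m - w m)%C
  end.

Definition rsP (s m : nat) (th : R) : C := fst (rs_jet s th) m.
Definition rsQ (s m : nat) (th : R) : C := snd (rs_jet s th) m.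

Lemma rsP_S (s m : nat) (th : R) :
  rsP (S s) m th = (rsP s m th + cis (2 ^ s * th) * leibniz (2 ^ s) (fun j => rsQ s j th) m)%C.
Proof. reflexivity. Qed.

Lemma rsQ_S (s m : nat) (th : R) :
  rsQ (S s) m th = (rsP s m th - cis (2 ^ s * th) * leibniz (2 ^ s) (fun j => rsQ s j th) m)%C.
Proof. reflexivity. Qed.

Lemma Cpow_cis (th : R) (n : nat) : Defs.Cpow (cis th) n = cis (INR n * th).
Proof.
  induction n as [|n IH]; simpl Defs.Cpow.
  - unfold cis; now rewrite Rmult_0_l, cos_0, sin_0.
  - rewrite IH, S_INR; unfold cis, Cmult; simpl.
    replace ((INR n + 1) * th) with (th + INR n * th) by ring.
    rewrite cos_plus, sin_plus; f_equal; ring.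
Qed.

Lemma RS_cis (s : nat) (th : R) : RS s (cis th) = (rsP s O th, rsQ s O th).
Proof.
  induction s as [|s IH]; [reflexivity|].
  simpl RS; rewrite IH, Cpow_cis, pow_INR, rsP_S, rsQ_S; reflexivity.
Qed.

Lemma is_Cderive_rs_jet (s : nat) :
  forall m, is_Cderive (rsP s m) (fun th => Ci * rsP s (S m) th)%C /\
            is_Cderive (rsQ s m) (fun th => Ci * rsQ s (S m) th)%C.
Proof.
  induction s as [|s IH]; intros m.
  { split; refine (is_Cderive_eq _ _ _ _ (is_Cderive_const _));
      intros; unfold rsP, rsQ; simpl; ring. }
  assert (DQ : forall j, is_Cderive (rsQ s j) (fun th => Ci * rsQ s (S j) th)%C)
    by (intros j; apply IH).
  assert (Dw := is_Cderive_cis_leibniz (2 ^ s) (rsQ s) DQ m).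
  destruct (IH m) as [DP _].
  split; [eapply is_Cderive_ext; [intros; symmetry; apply rsP_S|]
         |eapply is_Cderive_ext; [intros; symmetry; apply rsQ_S|]].
  - refine (is_Cderive_eq _ _ _ _ (is_Cderive_plus _ _ _ _ DP Dw)).
    intros th; rewrite rsP_S; ring.
  - refine (is_Cderive_eq _ _ _ _ (is_Cderive_minus _ _ _ _ DP Dw)).
    intros th; rewrite rsQ_S; ring.
Qed.

Definition rs_energy (s m : nat) (th : R) : R :=
  Cmod (rsP s m th) ^ 2 + Cmod (rsQ s m th) ^ 2.

Lemma Cmod_cis (a : R) : Cmod (cis a) = 1.
Proof.
  unfold Cmod, cis; simpl.
  pose proof (sin2_cos2 a) as E; unfold Rsqr in E.
  replace (cos a * (cos a * 1) + sin a * (sin a * 1)) with 1 by lra; apply sqrt_1.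
Qed.

Lemma Cmod_parallelogram (p w : C) :
  Cmod (p + w) ^ 2 + Cmod (p - w) ^ 2 = 2 * (Cmod p ^ 2 + Cmod w ^ 2).
Proof. rewrite !Cmod2_alt; unfold Re, Im; simpl; ring. Qed.

Lemma rs_energy_S (s m : nat) (th : R) :
  rs_energy (S s) m th =
  2 * (Cmod (rsP s m th) ^ 2 + Cmod (leibniz (2 ^ s) (fun j => rsQ s j th) m) ^ 2).
Proof.
  unfold rs_energy; rewrite rsP_S, rsQ_S, Cmod_parallelogram, Cmod_mult, Cmod_cis.
  now rewrite Rmult_1_l.
Qed.

Lemma rs_energy_O (s : nat) (th : R) : rs_energy s O th = 2 ^ (s + 1).
Proof.
  induction s as [|s IH].
  - unfold rs_energy, rsP, rsQ; simpl; rewrite Cmod_1; ring.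
  - rewrite rs_energy_S; unfold rs_energy in IH; simpl leibniz; rewrite IH.
    replace (S s + 1)%nat with (S (s + 1)) by lia; reflexivity.
Qed.

Lemma Cmod_pair_le_add (p q q' : C) (K r : R) :
  0 <= K -> Cmod p ^ 2 + Cmod q ^ 2 <= K ^ 2 -> Cmod (q' - q) <= r ->
  Cmod p ^ 2 + Cmod q' ^ 2 <= (K + r) ^ 2.
Proof.
  intros K_ge0 Hpq Hq'.
  assert (Htri : Cmod q' <= Cmod q + r).
  { replace q' with (q + (q' - q))%C at 1 by ring.
    eapply Rle_trans; [apply Cmod_triangle|lra]. }
  pose proof (Cmod_ge_0 p); pose proof (Cmod_ge_0 q); pose proof (Cmod_ge_0 (q' - q)).
  assert (Cmod q <= K) by nra.
  assert (Cmod q' ^ 2 <= (Cmod q + r) ^ 2) by (apply pow_incr; split; [apply Cmod_ge_0|exact Htri]).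
  assert (0 <= (K - Cmod q) * r) by (apply Rmult_le_pos; lra).
  nra.
Qed.

(* Splitting off the top term of the Leibniz sum (Minkowski in C^2) makes the bound grow by
   exactly 2 * 4^m per step; bounding the whole sum by the triangle inequality would not. *)
Lemma rs_energy_le (s m : nat) (th : R) :
  rs_energy s m th <= 2 ^ (s + 1) * ((2 ^ s) ^ m) ^ 2.
Proof.
  revert m; induction s as [|s IH]; intros m.
  { unfold rs_energy, rsP, rsQ; destruct m; simpl;
      rewrite ?Cmod_0, ?Cmod_1, ?pow1; lra. }
  set (c := 2 ^ s); set (rho := sqrt (2 ^ (s + 1))).
  assert (c_gt0 : 0 < c) by (apply pow_lt; lra).
  assert (rho_ge0 : 0 <= rho) by apply sqrt_pos.
  assert (rho2 : rho ^ 2 = 2 ^ (s + 1)) by (apply pow2_sqrt, pow_le; lra).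
  assert (HPQ : forall j, Cmod (rsP s j th) ^ 2 + Cmod (rsQ s j th) ^ 2 <= (rho * c ^ j) ^ 2)
    by (intros j; rewrite Rpow_mult_distr, rho2; apply IH).
  assert (HQ : forall j, (j <= m)%nat -> Cmod (rsQ s j th) <= rho * c ^ j).
  { intros j _; specialize (HPQ j).
    assert (0 <= rho * c ^ j) by (apply Rmult_le_pos; [|apply pow_le]; lra).
    pose proof (Cmod_ge_0 (rsQ s j th)); pose proof (pow2_ge_0 (Cmod (rsP s j th))); nra. }
  assert (Hstep := Cmod_pair_le_add _ _ (leibniz c (fun j => rsQ s j th) m) (rho * c ^ m) _
                     ltac:(apply Rmult_le_pos; [|apply pow_le]; lra) (HPQ m)
                     (Cmod_leibniz_sub_top c ltac:(lra) _ _ _ HQ)).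
  rewrite rs_energy_S; fold c.
  replace (2 ^ (S s + 1) * ((2 ^ S s) ^ m) ^ 2)
    with (2 * (rho * c ^ m + (2 ^ m - 1) * rho * c ^ m) ^ 2); [lra|].
  replace (rho * c ^ m + (2 ^ m - 1) * rho * c ^ m) with (rho * (2 * c) ^ m)
    by (rewrite Rpow_mult_distr; ring).
  rewrite Rpow_mult_distr, rho2; unfold c.
  replace (S s + 1)%nat with (S (s + 1)) by lia.
  change (2 ^ S (s + 1)) with (2 * 2 ^ (s + 1)); change (2 ^ S s) with (2 * 2 ^ s); ring.
Qed.

Lemma exists_large_main_term (w v : C) :
  Cmod w ^ 2 + Cmod v ^ 2 = 1 ->
  exists k, (k <= 3)%nat /\ 9 / 32 <= Rabs (Re (Ci ^ k * (w + 2 ^ k * v))).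
Proof.
  rewrite !Cmod2_alt; destruct w as [a b], v as [p q]; intros E.
  assert (R0 : Re (Ci ^ 0 * ((a, b) + 2 ^ 0 * (p, q))) = a + p) by (unfold Re; simpl; ring).
  assert (R1 : Re (Ci ^ 1 * ((a, b) + 2 ^ 1 * (p, q))) = - (b + 2 * q)) by (unfold Re; simpl; ring).
  assert (R2 : Re (Ci ^ 2 * ((a, b) + 2 ^ 2 * (p, q))) = - (a + 4 * p)) by (unfold Re; simpl; ring).
  assert (R3 : Re (Ci ^ 3 * ((a, b) + 2 ^ 3 * (p, q))) = b + 8 * q) by (unfold Re; simpl; ring).
  destruct (Rle_or_lt (9 / 32) (Rabs (a + p))) as [L0|L0]; [exists 0%nat; rewrite R0; auto|].
  destruct (Rle_or_lt (9 / 32) (Rabs (b + 2 * q))) as [L1|L1];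
    [exists 1%nat; rewrite R1, Rabs_Ropp; auto|].
  destruct (Rle_or_lt (9 / 32) (Rabs (a + 4 * p))) as [L2|L2];
    [exists 2%nat; rewrite R2, Rabs_Ropp; auto|].
  destruct (Rle_or_lt (9 / 32) (Rabs (b + 8 * q))) as [L3|L3]; [exists 3%nat; rewrite R3; auto|].
  exfalso; simpl in E.
  apply Rabs_def2 in L0, L1, L2, L3.
  assert (Hp : p * p <= (3 / 16) ^ 2) by nra.
  assert (Hq : q * q <= (3 / 32) ^ 2) by nra.
  assert (Ha : a * a <= (15 / 32) ^ 2) by nra.
  assert (Hb : b * b <= (15 / 32) ^ 2) by nra.
  nra.
Qed.

Lemma Rabs_Re_unit_mul_ge (e z z0 : C) (a b : R) :
  Cmod e = 1 -> a <= Rabs (Re (e * z0)) -> Cmod (z - z0) <= b ->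
  a - b <= Rabs (Re (e * z)).
Proof.
  intros He Hz0 Hz.
  assert (Herr : Rabs (Re (e * (z - z0))) <= b)
    by (eapply Rle_trans; [apply re_le_Cmod|]; rewrite Cmod_mult, He, Rmult_1_l; exact Hz).
  replace (e * z)%C with (e * z0 + e * (z - z0))%C in * by ring.
  rewrite re_plus; pose proof (Rabs_triang_inv (Re (e * z0)) (- Re (e * (z - z0)))) as Htri.
  rewrite Rabs_Ropp in Htri; unfold Rminus in Htri; rewrite Ropp_involutive in Htri; lra.
Qed.

Lemma nrm_sq (t : nat) : nrm t ^ 2 * 2 ^ (t + 1) = 1.
Proof.
  unfold nrm; simpl; rewrite Rmult_1_r, <- Rpower_plus.
  replace (- (INR t + 1) / 2 + - (INR t + 1) / 2) with (- INR (t + 1))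
    by (rewrite plus_INR; simpl; field).
  rewrite Rpower_Ropp, Rpower_pow by lra; field; apply pow_nonzero; lra.
Qed.

Section H_derivatives.
Variable t : nat.
Let u : R := / Tt t.
Let N : R := nrm t.

(* [alpha_jet j] and [beta_jet j] are (-i)^j alpha^(j) and (-i)^j beta^(j). *)
Definition alpha_jet (j : nat) (x : R) : C := (RtoC (N * u ^ j) * rsP t j (x * u))%C.
Definition beta_jet (j : nat) (x : R) : C := (RtoC (N * u ^ j) * rsQ t j (x * u))%C.

Lemma is_Cderive_alpha_beta_jet (j : nat) :
  is_Cderive (alpha_jet j) (fun x => Ci * alpha_jet (S j) x)%C /\
  is_Cderive (beta_jet j) (fun x => Ci * beta_jet (S j) x)%C.
Proof.
  destruct (is_Cderive_rs_jet t j) as [DP DQ].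
  split; [refine (is_Cderive_eq _ _ _ _ (is_Cderive_scal _ _ _ (is_Cderive_comp_scal u _ _ DP)))
         |refine (is_Cderive_eq _ _ _ _ (is_Cderive_scal _ _ _ (is_Cderive_comp_scal u _ _ DQ)))].
  all: intros x; unfold alpha_jet, beta_jet; C_ring.
Qed.

Definition H_jet (k : nat) (x : R) : C :=
  (cis (1 * x) * leibniz 1 (fun j => alpha_jet j x) k +
   cis (2 * x) * leibniz 2 (fun j => beta_jet j x) k)%C.

Lemma H_H_jet (x : R) : H t x = H_jet O x.
Proof.
  unfold H, H_jet, alpha, beta, alpha_jet, beta_jet, RS_P, RS_Q, Rdiv; simpl leibniz.
  rewrite RS_cis, Rmult_1_l, Rmult_1_r; reflexivity.
Qed.

Lemma Cderive_n_H (k : nat) (x : R) : Cderive_n (H t) k x = (Ci ^ k * H_jet k x)%C.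
Proof.
  rewrite (Cderive_n_ext _ (fun y => Ci ^ 0 * H_jet O y)%C)
    by (intros y; rewrite H_H_jet; simpl; ring).
  apply (Cderive_n_chain (fun k x => Ci ^ k * H_jet k x)%C); intros n.
  assert (Da : forall j, is_Cderive (alpha_jet j) (fun x => Ci * alpha_jet (S j) x)%C)
    by (intros j; apply is_Cderive_alpha_beta_jet).
  assert (Db : forall j, is_Cderive (beta_jet j) (fun x => Ci * beta_jet (S j) x)%C)
    by (intros j; apply is_Cderive_alpha_beta_jet).
  refine (is_Cderive_eq _ _ _ _
            (is_Cderive_scal _ _ _ (is_Cderive_plus _ _ _ _ (is_Cderive_cis_leibniz 1 _ Da n)
                                                            (is_Cderive_cis_leibniz 2 _ Db n)))).
  intros y; unfold H_jet; simpl; ring.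
Qed.

Lemma u_scale : 2 ^ t * u = / 1024.
Proof. unfold u, Tt; rewrite pow_add; field; apply pow_nonzero; lra. Qed.

Lemma alpha_beta_energy (j : nat) (x : R) :
  Cmod (alpha_jet j x) ^ 2 + Cmod (beta_jet j x) ^ 2 = (N * u ^ j) ^ 2 * rs_energy t j (x * u).
Proof.
  assert (u_gt0 : 0 < u) by (apply Rinv_0_lt_compat, pow_lt; lra).
  assert (N_gt0 : 0 < N) by apply exp_pos.
  unfold alpha_jet, beta_jet, rs_energy; rewrite !Cmod_mult, Cmod_R, Rabs_pos_eq; [ring|].
  apply Rmult_le_pos; [|apply pow_le]; lra.
Qed.

Lemma alpha_beta_energy_O (x : R) : Cmod (alpha_jet O x) ^ 2 + Cmod (beta_jet O x) ^ 2 = 1.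
Proof. rewrite alpha_beta_energy, rs_energy_O, pow_O, Rmult_1_r; apply nrm_sq. Qed.

Lemma alpha_beta_energy_le (j : nat) (x : R) :
  Cmod (alpha_jet j x) ^ 2 + Cmod (beta_jet j x) ^ 2 <= ((/ 1024) ^ j) ^ 2.
Proof.
  rewrite alpha_beta_energy, <- u_scale.
  assert (NN := nrm_sq t); fold N in NN.
  replace (((2 ^ t * u) ^ j) ^ 2) with ((N * u ^ j) ^ 2 * (2 ^ (t + 1) * ((2 ^ t) ^ j) ^ 2)).
  2: { transitivity (1 * ((2 ^ t * u) ^ j) ^ 2); [rewrite <- NN, !Rpow_mult_distr|]; ring. }
  apply Rmult_le_compat_l; [apply pow2_ge_0|apply rs_energy_le].
Qed.

Lemma Cmod_H_jet_sub_le (k : nat) (x : R) : (k <= 3)%nat ->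
  Cmod (H_jet k x - (cis (1 * x) * alpha_jet O x + 2 ^ k * (cis (2 * x) * beta_jet O x)))
  <= 1 / 32.
Proof.
  intros Hk.
  assert (Hab : forall j, Cmod (alpha_jet j x) <= 1 * (/ 1024) ^ j /\
                          Cmod (beta_jet j x) <= 1 * (/ 1024) ^ j).
  { intros j; pose proof (alpha_beta_energy_le j x).
    assert (0 <= (/ 1024) ^ j) by (apply pow_le; lra).
    pose proof (Cmod_ge_0 (alpha_jet j x)); pose proof (Cmod_ge_0 (beta_jet j x)).
    split; nra. }
  assert (Ea := Cmod_leibniz_sub_low 1 ltac:(lra) (/ 1024) 1 (fun j => alpha_jet j x) k
                  ltac:(lra) (fun j _ => proj1 (Hab j))).
  assert (Eb := Cmod_leibniz_sub_low 2 ltac:(lra) (/ 1024) 1 (fun j => beta_jet j x) k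
                  ltac:(lra) (fun j _ => proj2 (Hab j))).
  replace (H_jet k x - _)%C with
    (cis (1 * x) * (leibniz 1 (fun j => alpha_jet j x) k - 1 ^ k * alpha_jet O x) +
     cis (2 * x) * (leibniz 2 (fun j => beta_jet j x) k - 2 ^ k * beta_jet O x))%C
    by (unfold H_jet; rewrite Cpow_1_l; ring).
  eapply Rle_trans; [apply Cmod_triangle|].
  rewrite !Cmod_mult, !Cmod_cis, !Rmult_1_l.
  eapply Rle_trans; [apply Rplus_le_compat; [exact Ea|exact Eb]|].
  destruct k as [|[|[|[|k]]]]; [simpl; lra..|lia].
Qed.

End H_derivatives.

Theorem lemma3p5 (t : nat) (ht : Nat.Odd t) (x : R) :
  exists k : nat, (k <= 3)%nat /\ Rabs (Re (Cderive_n (H t) k x)) >= 1 / 4.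
Proof.
  set (w := (cis (1 * x) * alpha_jet t O x)%C); set (v := (cis (2 * x) * beta_jet t O x)%C).
  assert (Ewv : Cmod w ^ 2 + Cmod v ^ 2 = 1)
    by (unfold w, v; rewrite !Cmod_mult, !Cmod_cis, !Rmult_1_l; apply alpha_beta_energy_O).
  destruct (exists_large_main_term w v Ewv) as [k [Hk Hmain]].
  exists k; split; [exact Hk|]; rewrite Cderive_n_H; apply Rle_ge.
  replace (1 / 4) with (9 / 32 - 1 / 32) by field.
  apply (Rabs_Re_unit_mul_ge _ _ (w + 2 ^ k * v)%C);
    [|exact Hmain|exact (Cmod_H_jet_sub_le t k x Hk)].
  rewrite Cmod_pow, Cmod_Ci; apply pow1.
Qed.
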